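(* Let $p=p_1,\dots,p_m\in(\mathbb R^d)^m$ and $q=q_1,\dots,q_k\in(\mathbb R^d)^k$ with $\mathrm d_{dF}(p,q)\le1$ (with respect to the Euclidean metric). Let $T$ be an optimal traversal of $p$ and $q$ whose traversal graph $G_T$ has at most $k$ connected components, each of which is a star, and let $X_1,\dots,X_l\subseteq\mathbb R^d$ ($l\le k$) be the sets of points $\{p_i: (p\text{-vertex } i)\in K\}\cup\{q_j:(q\text{-vertex } j)\in K\}$ for the connected components $K$ of $G_T$. Let $\delta=4dk$ and let $z$ be uniform in $[0,\delta]$. Then \[ \Pr_z\big[\exists i\in\{1,\dots,l\}\ \exists x,y\in X_i:\ g_{\delta,z}(x)\ne g_{\delta,z}(y)\big]\le\frac12. \]
   Context: For $p\in(\mathbb R^d)^m$ and $q\in(\mathbb R^d)^k$, a traversal is a sequence of index pairs $(i_1,j_1),\dots,(i_t,j_t)$ with $(i_1,j_1)=(1,1)$, $(i_t,j_t)=(m,k)$, and for every $u<t$: $i_{u+1}-i_u\in\{0,1\}$, $j_{u+1}-j_u\in\{0,1\}$ and $(i_{u+1}-i_u)+(j_{u+1}-j_u)\ge1$; its cost is $\max_u\|p_{i_u}-q_{j_u}\|$, and $\mathrm d_{dF}(p,q)$ is the minimum cost over all traversals; a traversal is optimal if its cost equals $\mathrm d_{dF}(p,q)$. The traversal graph $G_T$ is the bipartite graph with vertex set $\{1,\dots,m\}\sqcup\{1,\dots,k\}$ (indices of vertices of $p$ and of $q$) and an edge between $p$-vertex $i$ and $q$-vertex $j$ for every pair $(i,j)\in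 T$. For $\delta>0$, $z\in[0,\delta]$, $g_{\delta,z}(x)=(\lfloor(x_1-z)/\delta\rfloor,\dots,\lfloor(x_d-z)/\delta\rfloor)$ for $x\in\mathbb R^d$. *)

From Stdlib Require Import Reals Lra Lia List Relations ClassicalEpsilon.
Import ListNotations.
Open Scope R_scope.

(* A point of R^d is a function nat -> R; only coordinates 0..d-1 matter. *)
Definition point := nat -> R.

Definition edist (d : nat) (x y : point) : R :=
  sqrt (fold_right Rplus 0 (map (fun c => (x c - y c) ^ 2) (seq 0 d))).

(* Curves: p : nat -> point with vertices p 1, ..., p m (1-based as in the paper). *)
Definition step (a b : nat * nat) : Prop :=
  let di := (fst b - fst a)%nat in
  let dj := (snd b - snd a)%nat in
  (fst a <= fst b /\ fst b <= S (fst a))%nat /\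
  (snd a <= snd b /\ snd b <= S (snd a))%nat /\
  (1 <= di + dj)%nat.

Definition is_traversal (m k : nat) (T : list (nat * nat)) : Prop :=
  T <> [] /\ hd_error T = Some (1%nat, 1%nat) /\ last T (0%nat, 0%nat) = (m, k) /\
  forall u : nat, (S u < length T)%nat -> step (nth u T (0%nat,0%nat)) (nth (S u) T (0%nat,0%nat)).

Definition trav_cost (d : nat) (p q : nat -> point) (T : list (nat * nat)) : R :=
  fold_right Rmax 0 (map (fun ij => edist d (p (fst ij)) (q (snd ij))) T).

Definition dF_le (d m k : nat) (p q : nat -> point) (r : R) : Prop :=
  exists T, is_traversal m k T /\ trav_cost d p q T <= r.

Definition optimal_traversal (d m k : nat) (p q : nat -> point) (T : list (nat * nat)) : Prop :=
  is_traversal m k T /\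
  forall T', is_traversal m k T' -> trav_cost d p q T <= trav_cost d p q T'.

Inductive vtx : Type := PV (i : nat) | QV (j : nat).

Definition valid_vtx (m k : nat) (v : vtx) : Prop :=
  match v with PV i => (1 <= i <= m)%nat | QV j => (1 <= j <= k)%nat end.

Definition tg_edge (T : list (nat * nat)) (u v : vtx) : Prop :=
  exists i j, In (i, j) T /\ ((u = PV i /\ v = QV j) \/ (u = QV j /\ v = PV i)).

Definition tg_conn (T : list (nat * nat)) : vtx -> vtx -> Prop :=
  clos_refl_trans vtx (tg_edge T).

Definition at_most_components (m k : nat) (T : list (nat * nat)) (n : nat) : Prop :=
  exists reps : list vtx, (length reps <= n)%nat /\
    forall v, valid_vtx m k v -> exists r, In r reps /\ tg_conn T v r.

Definition components_are_stars (m k : nat) (T : list (nat * nat)) : Prop :=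
  forall v, valid_vtx m k v ->
    exists c, tg_conn T v c /\
      forall u w, tg_conn T v u -> tg_conn T v w -> tg_edge T u w -> u = c \/ w = c.

Definition vpt (p q : nat -> point) (v : vtx) : point :=
  match v with PV i => p i | QV j => q j end.

(* g_{delta,z}(x), coordinatewise (Int_part = floor) *)
Definition gcell (delta z : R) (x : point) : nat -> Z :=
  fun c => Int_part ((x c - z) / delta).

Definition bad_event (d m k : nat) (p q : nat -> point) (T : list (nat * nat))
  (delta z : R) : Prop :=
  exists u v, valid_vtx m k u /\ tg_conn T u v /\
    exists c, (c < d)%nat /\ gcell delta z (vpt p q u) c <> gcell delta z (vpt p q v) c.

Definition indicator (P : R -> Prop) : R -> R :=
  fun z => if excluded_middle_informative (P z) then 1 else 0.

From Stdlib Require Import Reals List Lra Lia Relations ClassicalEpsilon.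
From Coquelicot Require Import Coquelicot.
Open Scope R_scope.

(* Every component of G_T is a star whose points all lie within distance 1 of
   its centre c (optimality of T and d_dF(p, q) <= 1), hence within 1 of c in each
   coordinate.  If two of them get different cells in coordinate j, a boundary
   z + n delta of the shifted grid lies in (c_j - 1, c_j + 1].  So the indicator of
   the bad event is bounded by the number of such boundaries, summed over the at
   most k centres and d coordinates; each summand has integral exactly 2 over
   z in [0, delta], and the total 2dk is delta / 2. *)

Lemma Int_part_le_compat x y : x <= y -> (Int_part x <= Int_part y)%Z.
Proof.
  intros Hxy. destruct (base_Int_part x) as [Hx _]. destruct (base_Int_part y) as [_ Hy].
  assert (Hlt : IZR (Int_part x) < IZR (Int_part y + 1)) by (rewrite plus_IZR; lra).
  apply lt_IZR in Hlt. lia.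
Qed.

Lemma Rmax_Rabs x y : Rmax x y = / 2 * (x + y + Rabs (x - y)).
Proof. unfold Rmax, Rabs. destruct (Rle_dec x y), (Rcase_abs (x - y)); lra. Qed.

Lemma ex_RInt_Rmax (f g : R -> R) a b :
  ex_RInt f a b -> ex_RInt g a b -> ex_RInt (fun x => Rmax (f x) (g x)) a b.
Proof.
  intros Hf Hg.
  apply (ex_RInt_ext (fun x => / 2 * (f x + g x + Rabs (f x - g x)))).
  - intros x _. symmetry. apply Rmax_Rabs.
  (* Coquelicot's lemmas are instantiated at [R_NormedModule] by hand: leaving the
     module to unification against [R]-valued goals does not terminate. *)
  - pose proof (@ex_RInt_plus R_NormedModule f g a b Hf Hg) as Hsum.
    pose proof (ex_RInt_norm _ _ _ (@ex_RInt_minus R_NormedModule f g a b Hf Hg)) as Hdiff.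
    exact (@ex_RInt_scal R_NormedModule _ a b (/ 2) (@ex_RInt_plus R_NormedModule _ _ a b Hsum Hdiff)).
Qed.

Lemma ex_RInt_Rmin (f g : R -> R) a b :
  ex_RInt f a b -> ex_RInt g a b -> ex_RInt (fun x => Rmin (f x) (g x)) a b.
Proof.
  intros Hf Hg.
  apply (ex_RInt_ext (fun x => - Rmax (- f x) (- g x))).
  - intros x _. rewrite Ropp_Rmax, !Ropp_involutive. reflexivity.
  - apply (@ex_RInt_opp R_NormedModule (fun x => Rmax (- f x) (- g x))), ex_RInt_Rmax.
    + exact (@ex_RInt_opp R_NormedModule f a b Hf).
    + exact (@ex_RInt_opp R_NormedModule g a b Hg).
Qed.

Lemma is_RInt_fold_Rplus {X : Type} (F : X -> R -> R) (l : list X) a b (c : R) :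
  (forall x, In x l -> is_RInt (F x) a b c) ->
  is_RInt (fun z => fold_right Rplus 0 (map (fun x => F x z) l)) a b (INR (length l) * c).
Proof.
  induction l as [|x l IH]; intros HF.
  - simpl. replace (0 * c) with (scal (b - a) 0) by (unfold scal; simpl; unfold mult; simpl; ring).
    exact (@is_RInt_const R_NormedModule a b 0).
  - replace (INR (length (x :: l)) * c) with (plus c (INR (length l) * c))
      by (cbn [length]; rewrite S_INR; unfold plus; simpl; ring).
    refine (@is_RInt_plus R_NormedModule _ _ a b _ _ (HF x (or_introl eq_refl)) _).
    apply IH. intros y Hy. exact (HF y (or_intror Hy)).
Qed.

Lemma fold_Rplus_nonneg (l : list R) :
  (forall x, In x l -> 0 <= x) -> 0 <= fold_right Rplus 0 l.
Proof.
  induction l as [|y l IH]; intros Hl; simpl; [lra|].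
  pose proof (Hl y (or_introl eq_refl)). pose proof (IH (fun x Hx => Hl x (or_intror Hx))). lra.
Qed.

Lemma fold_Rplus_ge_In (l : list R) x :
  (forall y, In y l -> 0 <= y) -> In x l -> x <= fold_right Rplus 0 l.
Proof.
  induction l as [|y l IH]; intros Hl Hx; simpl; [destruct Hx|].
  assert (Hl' : forall w, In w l -> 0 <= w) by (intros w Hw; apply Hl; right; exact Hw).
  destruct Hx as [<-|Hx].
  - pose proof (fold_Rplus_nonneg l Hl'). lra.
  - pose proof (IH Hl' Hx). pose proof (Hl y (or_introl eq_refl)). lra.
Qed.

Lemma fold_Rmax_ge_In (l : list R) x : In x l -> x <= fold_right Rmax 0 l.
Proof.
  induction l as [|y l IH]; simpl; [tauto|]. intros [->|Hx]; [apply Rmax_l|].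
  eapply Rle_trans; [apply IH, Hx|apply Rmax_r].
Qed.

Lemma indicator_ext (P Q : R -> Prop) z : (P z <-> Q z) -> indicator P z = indicator Q z.
Proof.
  intros HPQ. unfold indicator.
  destruct (excluded_middle_informative (P z)), (excluded_middle_informative (Q z)); tauto.
Qed.

Lemma indicator_or (P Q : R -> Prop) z :
  indicator (fun z => P z \/ Q z) z = Rmax (indicator P z) (indicator Q z).
Proof.
  unfold indicator, Rmax.
  destruct (excluded_middle_informative (P z)), (excluded_middle_informative (Q z)),
    (excluded_middle_informative (P z \/ Q z)), (Rle_dec _ _); tauto || lra.
Qed.

Lemma ex_RInt_indicator_Exists {X : Type} (l : list X) (P : X -> R -> Prop) a b :
  (forall x, In x l -> ex_RInt (indicator (P x)) a b) ->
  ex_RInt (indicator (fun z => exists x, In x l /\ P x z)) a b.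
Proof.
  induction l as [|x l IH]; intros HP.
  - apply (ex_RInt_ext (fun _ => 0)); [|exact (@ex_RInt_const R_NormedModule a b 0)].
    intros z _. unfold indicator.
    destruct (excluded_middle_informative _) as [[y [[] _]]|]; reflexivity.
  - apply (ex_RInt_ext (fun z => Rmax (indicator (P x) z)
                                    (indicator (fun z => exists y, In y l /\ P y z) z))).
    + intros z _. rewrite <- indicator_or. apply indicator_ext. simpl. split.
      * intros [Hx|[y [Hy HPy]]]; [exists x|exists y]; tauto.
      * intros [y [[<-|Hy] HPy]]; [left|right; exists y]; tauto.
    + apply ex_RInt_Rmax; [apply HP; left; reflexivity|].
      apply IH. intros y Hy. apply HP. right. exact Hy.
Qed.

Lemma ex_RInt_indicator_and_const (Q : Prop) (P : R -> Prop) a b :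
  ex_RInt (indicator P) a b -> ex_RInt (indicator (fun z => Q /\ P z)) a b.
Proof.
  intros HP. destruct (classic Q) as [HQ|HQ].
  - apply (ex_RInt_ext (indicator P)); [|exact HP].
    intros z _. apply indicator_ext. tauto.
  - apply (ex_RInt_ext (fun _ => 0)); [|exact (@ex_RInt_const R_NormedModule a b 0)].
    intros z _. unfold indicator. destruct (excluded_middle_informative _); tauto.
Qed.

Definition cell (dl x z : R) : Z := Int_part ((x - z) / dl).

Lemma cell_le_compat dl x y z : 0 < dl -> x <= y -> (cell dl x z <= cell dl y z)%Z.
Proof.
  intros Hdl Hxy. apply Int_part_le_compat. unfold Rdiv.
  apply Rmult_le_compat_r; [left; apply Rinv_0_lt_compat, Hdl|lra].
Qed.

Lemma cell_eq dl x z n : 0 < dl -> IZR n * dl <= x - z < IZR n * dl + dl -> cell dl x z = n.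
Proof.
  intros Hdl Hn. symmetry. apply Int_part_spec.
  set (r := (x - z) / dl). assert (x - z = r * dl) by (unfold r; field; lra). nra.
Qed.

(* With x = n dl + t and 0 <= t < dl, the cell index is n on (0, t) and n - 1 on (t, dl). *)
Lemma is_RInt_cell dl x : 0 < dl -> is_RInt (fun z => IZR (cell dl x z)) 0 dl (x - dl).
Proof.
  intros Hdl.
  set (n := Int_part (x / dl)).
  remember (x - IZR n * dl) as t eqn:Htdef.
  assert (Ht : 0 <= t < dl).
  { destruct (base_Int_part (x / dl)) as [H1 H2]. fold n in H1, H2.
    set (r := x / dl) in *. assert (x = r * dl) by (unfold r; field; lra). nra. }
  assert (Hleft : is_RInt (fun z => IZR (cell dl x z)) 0 t (scal (t - 0) (IZR n))).
  { apply (is_RInt_ext (fun _ => IZR n)); [|exact (@is_RInt_const R_NormedModule 0 t _)].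
    intros z Hz. rewrite Rmin_left, Rmax_right in Hz by lra.
    rewrite (cell_eq dl x z n); [reflexivity|exact Hdl|lra]. }
  assert (Hright : is_RInt (fun z => IZR (cell dl x z)) t dl (scal (dl - t) (IZR (n - 1)))).
  { apply (is_RInt_ext (fun _ => IZR (n - 1))); [|exact (@is_RInt_const R_NormedModule t dl _)].
    intros z Hz. rewrite Rmin_left, Rmax_right in Hz by lra.
    rewrite (cell_eq dl x z (n - 1)); [reflexivity|exact Hdl|].
    rewrite minus_IZR. lra. }
  replace (x - dl) with (plus (scal (t - 0) (IZR n)) (scal (dl - t) (IZR (n - 1)))).
  - exact (is_RInt_Chasles _ _ _ _ _ _ Hleft Hright).
  - unfold plus, scal; simpl. unfold mult; simpl. rewrite minus_IZR, Htdef. ring.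
Qed.

(* The number of grid points z + n dl in (A - 1, A + 1]. *)
Definition crossings (dl A z : R) : R := IZR (cell dl (A + 1) z - cell dl (A - 1) z).

Lemma crossings_nonneg dl A z : 0 < dl -> 0 <= crossings dl A z.
Proof.
  intros Hdl. unfold crossings. apply IZR_le.
  pose proof (cell_le_compat dl (A - 1) (A + 1) z Hdl ltac:(lra)). lia.
Qed.

Lemma crossings_ge_1 dl A x y z : 0 < dl ->
  Rabs (x - A) <= 1 -> Rabs (y - A) <= 1 -> cell dl x z <> cell dl y z ->
  1 <= crossings dl A z.
Proof.
  intros Hdl Hx Hy Hxy. apply Rabs_le_between in Hx, Hy.
  pose proof (cell_le_compat dl (A - 1) x z Hdl ltac:(lra)).
  pose proof (cell_le_compat dl x (A + 1) z Hdl ltac:(lra)).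
  pose proof (cell_le_compat dl (A - 1) y z Hdl ltac:(lra)).
  pose proof (cell_le_compat dl y (A + 1) z Hdl ltac:(lra)).
  unfold crossings. apply IZR_le. lia.
Qed.

Lemma is_RInt_crossings dl A : 0 < dl -> is_RInt (crossings dl A) 0 dl 2.
Proof.
  intros Hdl. unfold crossings.
  apply (is_RInt_ext (fun z => minus (IZR (cell dl (A + 1) z)) (IZR (cell dl (A - 1) z)))).
  - intros z _. unfold minus, plus, opp; simpl. rewrite minus_IZR. reflexivity.
  - replace 2 with (minus (A + 1 - dl) (A - 1 - dl)) by (unfold minus, plus, opp; simpl; ring).
    exact (is_RInt_minus _ _ _ _ _ _ (is_RInt_cell dl (A + 1) Hdl) (is_RInt_cell dl (A - 1) Hdl)).
Qed.

Lemma ex_RInt_indicator_cell_neq dl x y : 0 < dl ->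
  ex_RInt (indicator (fun z => cell dl x z <> cell dl y z)) 0 dl.
Proof.
  intros Hdl.
  apply (ex_RInt_ext (fun z => Rmin 1 (Rabs (IZR (cell dl x z) - IZR (cell dl y z))))).
  - intros z _. unfold indicator. rewrite <- minus_IZR.
    destruct (excluded_middle_informative _) as [Hne|Heq].
    + apply Rmin_left. rewrite <- abs_IZR. apply IZR_le. lia.
    + replace (cell dl x z - cell dl y z)%Z with 0%Z by (apply NNPP in Heq; lia).
      rewrite Rabs_R0. apply Rmin_right. lra.
  - apply ex_RInt_Rmin; [exact (@ex_RInt_const R_NormedModule 0 dl 1)|].
    apply ex_RInt_norm.
    exact (@ex_RInt_minus R_NormedModule _ _ 0 dl
             (ex_intro _ _ (is_RInt_cell dl x Hdl)) (ex_intro _ _ (is_RInt_cell dl y Hdl))).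
Qed.

Lemma coord_le_edist d (x y : point) c : (c < d)%nat -> Rabs (x c - y c) <= edist d x y.
Proof.
  intros Hc. unfold edist. rewrite <- sqrt_Rsqr_abs. apply sqrt_le_1_alt.
  rewrite Rsqr_pow2. apply fold_Rplus_ge_In.
  - intros r Hr. apply in_map_iff in Hr. destruct Hr as [c' [<- _]]. apply pow2_ge_0.
  - apply in_map_iff. exists c. split; [reflexivity|]. apply in_seq. lia.
Qed.

Lemma optimal_traversal_edist_le d m k p q T r i j :
  dF_le d m k p q r -> optimal_traversal d m k p q T -> In (i, j) T ->
  edist d (p i) (q j) <= r.
Proof.
  intros [T0 [HT0 Hcost]] [_ Hopt] Hij.
  apply Rle_trans with (trav_cost d p q T); [|specialize (Hopt T0 HT0); lra].
  apply fold_Rmax_ge_In, in_map_iff. exists (i, j). split; [reflexivity|exact Hij].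
Qed.

Lemma tg_edge_sym T u v : tg_edge T u v -> tg_edge T v u.
Proof. intros [i [j [Hij [[-> ->]|[-> ->]]]]]; exists i, j; tauto. Qed.

Lemma tg_conn_sym T u v : tg_conn T u v -> tg_conn T v u.
Proof.
  induction 1.
  - apply rt_step, tg_edge_sym. assumption.
  - apply rt_refl.
  - eapply rt_trans; eassumption.
Qed.

Definition tg_vertices (T : list (nat * nat)) : list vtx :=
  map (fun ij => PV (fst ij)) T ++ map (fun ij => QV (snd ij)) T.

Lemma tg_conn_vertices T u v : tg_conn T u v -> v = u \/ In v (tg_vertices T).
Proof.
  intros Huv. apply clos_rt_rtn1 in Huv. destruct Huv as [|w v Hwv _]; [left; reflexivity|right].
  destruct Hwv as [i [j [Hij [[_ ->]|[_ ->]]]]]; apply in_or_app.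
  - right. apply in_map_iff. exists (i, j). auto.
  - left. apply in_map_iff. exists (i, j). auto.
Qed.

Definition star_center (T : list (nat * nat)) (v c : vtx) : Prop :=
  forall w, tg_conn T v w -> w = c \/ tg_edge T c w.

Lemma star_center_of_star T v c : tg_conn T v c ->
  (forall a b, tg_conn T v a -> tg_conn T v b -> tg_edge T a b -> a = c \/ b = c) ->
  star_center T v c.
Proof.
  intros Hvc Hstar w Hvw.
  assert (Hcw : tg_conn T c w) by (eapply rt_trans; [apply tg_conn_sym, Hvc|exact Hvw]).
  apply clos_rt_rtn1 in Hcw. inversion Hcw as [|y w' Hyw Hcy]; subst; [left; reflexivity|].
  apply clos_rtn1_rt in Hcy.
  assert (Hvy : tg_conn T v y) by (apply rt_trans with c; assumption).
  destruct (Hstar y w Hvy Hvw Hyw) as [Hy|Hw]; [subst y; right; exact Hyw|left; exact Hw].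
Qed.

Lemma star_center_conn T u v c : tg_conn T u v -> star_center T u c -> star_center T v c.
Proof. intros Huv Hc w Hvw. apply Hc. apply rt_trans with v; assumption. Qed.

Lemma component_centers m k T : components_are_stars m k T ->
  exists cen : vtx -> vtx,
    forall u r, valid_vtx m k u -> tg_conn T u r -> star_center T r (cen r).
Proof.
  intros Hstars.
  assert (Hr : forall r, exists c, forall u, valid_vtx m k u -> tg_conn T u r -> star_center T r c).
  { intros r. destruct (classic (exists u, valid_vtx m k u /\ tg_conn T u r)) as [[u [Hu Hur]]|Hnone].
    - destruct (Hstars u Hu) as [c [Huc Hstar]]. exists c. intros u' _ Hu'r.
      apply (star_center_conn T u); [exact Hur|]. apply star_center_of_star; assumption.
    - exists r. intros u Hu Hur. exfalso. apply Hnone. exists u. tauto. }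
  destruct (ClassicalEpsilon.choice _ Hr) as [cen Hcen].
  exists cen. intros u r Hu Hur. exact (Hcen r u Hu Hur).
Qed.

Section BadEvent.

Variables (d m k : nat) (p q : nat -> point) (T : list (nat * nat)) (delta : R).
Hypothesis delta_pos : 0 < delta.

Lemma ex_RInt_bad_event : ex_RInt (indicator (bad_event d m k p q T delta)) 0 delta.
Proof.
  set (V := map PV (seq 1 m) ++ map QV (seq 1 k) ++ tg_vertices T).
  set (P := fun '((u, v), c) z =>
              (valid_vtx m k u /\ tg_conn T u v /\ (c < d)%nat) /\
              cell delta (vpt p q u c) z <> cell delta (vpt p q v c) z).
  apply (ex_RInt_ext (indicator (fun z => exists x, In x (list_prod (list_prod V V) (seq 0 d)) /\ P x z))).
  - intros z _. apply indicator_ext. split.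
    + intros [[[u v] c] [_ [[Hu [Huv Hc]] Hne]]]. exists u, v. split; [exact Hu|].
      split; [exact Huv|]. exists c. split; [exact Hc|exact Hne].
    + intros [u [v [Hu [Huv [c [Hc Hne]]]]]]. exists ((u, v), c).
      split; [|simpl; tauto].
      assert (HuV : In u V).
      { unfold V. rewrite !in_app_iff. destruct u as [i|j]; simpl in Hu.
        - left. apply in_map, in_seq. lia.
        - right. left. apply in_map, in_seq. lia. }
      apply in_prod; [apply in_prod; [exact HuV|]|apply in_seq; lia].
      destruct (tg_conn_vertices T u v Huv) as [->|Hv]; [exact HuV|].
      unfold V. rewrite !in_app_iff. tauto.
  - apply ex_RInt_indicator_Exists. intros [[u v] c] _.
    apply ex_RInt_indicator_and_const, ex_RInt_indicator_cell_neq, delta_pos.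
Qed.

Hypothesis edges_short : forall i j, In (i, j) T -> edist d (p i) (q j) <= 1.

Lemma star_center_coord_close r c0 w c : star_center T r c0 -> tg_conn T r w -> (c < d)%nat ->
  Rabs (vpt p q w c - vpt p q c0 c) <= 1.
Proof.
  intros Hc0 Hrw Hc. destruct (Hc0 w Hrw) as [->|[i [j [Hij [[-> ->]|[-> ->]]]]]]; simpl.
  - rewrite Rminus_diag, Rabs_R0. lra.
  - rewrite Rabs_minus_sym. eapply Rle_trans; [apply coord_le_edist, Hc|apply edges_short, Hij].
  - eapply Rle_trans; [apply coord_le_edist, Hc|apply edges_short, Hij].
Qed.

Variables (reps : list vtx) (cen : vtx -> vtx).
Hypothesis reps_cover : forall u, valid_vtx m k u -> exists r, In r reps /\ tg_conn T u r.
Hypothesis cen_center : forall u r, valid_vtx m k u -> tg_conn T u r -> star_center T r (cen r).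

Definition total_crossings (z : R) : R :=
  fold_right Rplus 0
    (map (fun rc => crossings delta (vpt p q (cen (fst rc)) (snd rc)) z) (list_prod reps (seq 0 d))).

Lemma indicator_bad_event_le z : indicator (bad_event d m k p q T delta) z <= total_crossings z.
Proof.
  assert (Hnonneg : forall y, In y (map (fun rc => crossings delta (vpt p q (cen (fst rc)) (snd rc)) z)
                                       (list_prod reps (seq 0 d))) -> 0 <= y).
  { intros y Hy. apply in_map_iff in Hy. destruct Hy as [rc [<- _]]. apply crossings_nonneg, delta_pos. }
  unfold indicator. destruct (excluded_middle_informative _) as [Hbad|_];
    [|apply fold_Rplus_nonneg, Hnonneg].
  destruct Hbad as [u [v [Hu [Huv [c [Hc Hne]]]]]].
  destruct (reps_cover u Hu) as [r [Hr Hur]].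
  pose proof (cen_center u r Hu Hur) as Hcen.
  assert (Hru : tg_conn T r u) by (apply tg_conn_sym, Hur).
  assert (Hrv : tg_conn T r v) by (apply rt_trans with u; assumption).
  apply Rle_trans with (crossings delta (vpt p q (cen r) c) z).
  - apply (crossings_ge_1 delta _ (vpt p q u c) (vpt p q v c) z delta_pos);
      [apply (star_center_coord_close r)..|exact Hne]; assumption.
  - apply fold_Rplus_ge_In; [exact Hnonneg|].
    apply in_map_iff. exists (r, c). split; [reflexivity|]. apply in_prod; [exact Hr|apply in_seq; lia].
Qed.

Lemma RInt_bad_event_le :
  RInt (indicator (bad_event d m k p q T delta)) 0 delta <= 2 * INR d * INR (length reps).
Proof.
  assert (Hsum : is_RInt total_crossings 0 delta (INR (length (list_prod reps (seq 0 d))) * 2)).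
  { apply (is_RInt_fold_Rplus (fun rc z => crossings delta (vpt p q (cen (fst rc)) (snd rc)) z)).
    intros rc _. apply is_RInt_crossings, delta_pos. }
  rewrite length_prod, length_seq, mult_INR in Hsum.
  replace (2 * INR d * INR (length reps)) with (INR (length reps) * INR d * 2) by ring.
  rewrite <- (is_RInt_unique _ _ _ _ Hsum).
  apply RInt_le; [lra|apply ex_RInt_bad_event|eexists; exact Hsum|].
  intros z _. apply indicator_bad_event_le.
Qed.

End BadEvent.

Theorem mainTheorem12 (d m k : nat) (p q : nat -> point) (T : list (nat * nat))
  (hd : (1 <= d)%nat) (hm : (1 <= m)%nat) (hk : (1 <= k)%nat)
  (hdF : dF_le d m k p q 1)
  (hT : optimal_traversal d m k p q T)
  (hcomp : at_most_components m k T k)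
  (hstar : components_are_stars m k T) :
  let delta := 4 * INR d * INR k in
  exists pr : Riemann_integrable (indicator (bad_event d m k p q T delta)) 0 delta,
    RiemannInt pr / delta <= 1 / 2.
Proof.
  intros delta.
  assert (Hd : 1 <= INR d) by (apply (le_INR 1); lia).
  assert (Hk : 1 <= INR k) by (apply (le_INR 1); lia).
  assert (Hdelta : 0 < delta) by (unfold delta; nra).
  exists (ex_RInt_Reals_0 _ _ _ (ex_RInt_bad_event d m k p q T delta Hdelta)).
  rewrite <- RInt_Reals.
  destruct hcomp as [reps [Hreps Hcover]].
  destruct (component_centers m k T hstar) as [cen Hcen].
  pose proof (RInt_bad_event_le d m k p q T delta Hdelta
                (fun i j => optimal_traversal_edist_le d m k p q T 1 i j hdF hT)
                reps cen Hcover Hcen) as Hbound.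
  apply le_INR in Hreps.
  unfold Rdiv. apply Rmult_le_reg_r with delta; [exact Hdelta|].
  rewrite Rmult_assoc, Rinv_l by lra. unfold delta in *. nra.
Qed.
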